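(* Let $k$ be a field of characteristic zero, let $n\ge 2$, and let $\mathcal{L}$ be a finite extension of the rational function field $k(\tau,\tau_2,\dots,\tau_n)$ in which $k$ is algebraically closed, given as $\mathcal{L}=k(\tau,\tau_2,\dots,\tau_n)(\alpha)$. Write the coefficients of the minimal polynomial of $\alpha$ over $k(\tau,\tau_2,\dots,\tau_n)$ as $p_i/q_i$ with $p_i,q_i\in k[\tau,\tau_2,\dots,\tau_n]$, and let $\kappa_0\subseteq k$ be the subfield generated by all coefficients of all the $p_i,q_i$. Let $k_1$ be the algebraic closure of $k(\tau_2,\dots,\tau_n)$ in $\mathcal{L}$. Then there exist a finite extension $\kappa\subseteq\mathcal{L}$ of $\kappa_0(\tau_2,\dots,\tau_n)$ and a finite extension $K\subseteq\mathcal{L}$ of $\kappa(\tau)$ such that the algebraic function field $\mathcal{L}/k_1$ is a constant field extension of $K/\kappa$.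
   Context: For subfields $\kappa\subseteq K$ and $\kappa\subseteq k_1$ of $\mathcal{L}$, ''$\mathcal{L}/k_1$ is a constant field extension of $K/\kappa$'' means that the compositum $Kk_1$ equals $\mathcal{L}$ and $k_1\cap K=\kappa$. *)

From HB Require Import structures.
From mathcomp Require Import all_boot all_order all_algebra.
From mathcomp Require Import mpoly.
Set Implicit Arguments. Unset Strict Implicit. Unset Printing Implicit Defensive.
Import Order.TTheory GRing.Theory Num.Theory.
Local Open Scope ring_scope.

Section FieldSets.
Variable F : fieldType.

Definition is_subfield (S : F -> Prop) : Prop :=
  [/\ S 0, S 1,
      (forall x y, S x -> S y -> S (x - y)),
      (forall x y, S x -> S y -> S (x * y)) &
      (forall x, S x -> S x^-1)].

Definition gen_field (A : F -> Prop) : F -> Prop :=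
  fun x => forall S, is_subfield S -> (forall y, A y -> S y) -> S x.

Definition poly_over (B : F -> Prop) (p : {poly F}) : Prop :=
  forall i, B p`_i.

Definition algebraic_over (B : F -> Prop) (x : F) : Prop :=
  exists2 p : {poly F}, p != 0 & poly_over B p /\ root p x.

Definition minpoly_over (B : F -> Prop) (x : F) (p : {poly F}) : Prop :=
  [/\ p \is monic, poly_over B p, root p x &
      forall q : {poly F}, q != 0 -> poly_over B q -> root q x ->
        (size p <= size q)%N].

Definition finite_ext (E B : F -> Prop) : Prop :=
  [/\ is_subfield E, is_subfield B, (forall x, B x -> E x) &
      exists s : seq F, (forall i, (i < size s)%N -> E s`_i) /\
        forall x, E x -> exists c : nat -> F,
          (forall i, B (c i)) /\ x = \sum_(i < size s) c i * s`_i].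

Definition alg_closed_in (B E : F -> Prop) : Prop :=
  forall x, E x -> algebraic_over B x -> B x.

Definition alg_closure_in (B : F -> Prop) : F -> Prop := algebraic_over B.

Definition constant_field_ext (E k1 K kappa : F -> Prop) : Prop :=
  (forall x, E x <-> gen_field (fun y => K y \/ k1 y) x) /\
  (forall x, (k1 x /\ K x) <-> kappa x).

End FieldSets.

(* Put kappa0F := kappa0(tau, tau_2, ..., tau_n), K := kappa0F(alpha) and kappa := k1 ∩ K.
   The compositum K k1 contains k, the tau's and alpha, hence is L, and k1 ∩ K = kappa by
   construction.  The minimal polynomial of alpha has its coefficients in kappa0F, so the
   powers of alpha span K over kappa0F ⊆ kappa(tau).  The real point is that kappa is finite
   over kappa0T := kappa0(tau_2, ..., tau_n): tau is transcendental over k(tau_2, ..., tau_n),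
   hence over its algebraic closure k1 ⊇ kappa, so elements of kappa independent over kappa0T
   stay independent over kappa0T(tau) = kappa0F, and there are at most [K : kappa0F] of them.
   Algebraicity is handled through modules: z is algebraic over S as soon as multiplication
   by z preserves a finitely generated S-module containing 1; this makes the algebraic
   elements a field and algebraicity transitive. *)

From HB Require Import structures.
From mathcomp Require Import all_boot all_order all_algebra.
From mathcomp Require Import mpoly.
From mathcomp Require Import ring.
From Stdlib Require Import Classical.
From Stdlib Require ClassicalEpsilon.
Import GRing.Theory.
Local Open Scope ring_scope.
Set Implicit Arguments. Unset Strict Implicit. Unset Printing Implicit Defensive.

Lemma exists_maximal_nat (P : nat -> Prop) N :
  P 0%N -> (forall j, P j -> (j <= N)%N) -> exists j, P j /\ ~ P j.+1.
Proof.
move=> P0 bounded; apply: NNPP => no_max.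
have Pall j : P j by elim: j => // j IH; apply: NNPP => nPj1; apply: no_max; exists j.
by have := bounded _ (Pall N.+1); rewrite ltnn.
Qed.

Lemma bump_ltS h j m : (j < m)%N -> (bump h j < m.+1)%N.
Proof. by move=> ltjm; rewrite /bump; case: (h <= j)%N; rewrite ?add1n ?add0n // ltnW. Qed.

Section Subfields.
Variable F : fieldType.
Implicit Types (A B S T : F -> Prop) (x y : F).

Section SubfieldClosure.
Variable S : F -> Prop.
Hypothesis sfS : is_subfield S.

Lemma subfield0 : S 0. Proof. by case: sfS. Qed.
Lemma subfield1 : S 1. Proof. by case: sfS. Qed.
Lemma subfieldB x y : S x -> S y -> S (x - y). Proof. by case: sfS => _ _ + _ _; apply. Qed.
Lemma subfieldM x y : S x -> S y -> S (x * y). Proof. by case: sfS => _ _ _ + _; apply. Qed.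
Lemma subfieldV x : S x -> S x^-1. Proof. by case: sfS => _ _ _ _; apply. Qed.

Lemma subfieldN x : S x -> S (- x).
Proof. by rewrite -sub0r; apply: subfieldB subfield0. Qed.

Lemma subfieldD x y : S x -> S y -> S (x + y).
Proof. by move=> Sx Sy; rewrite -[y]opprK; apply/subfieldB/subfieldN. Qed.

Lemma subfield_div x y : S x -> S y -> S (x / y).
Proof. by move=> Sx Sy; apply/subfieldM/subfieldV. Qed.

Lemma subfieldX x m : S x -> S (x ^+ m).
Proof.
by move=> Sx; elim: m => [|m IH]; rewrite ?expr0 ?exprS; [apply: subfield1 | apply: subfieldM].
Qed.

Lemma subfield_sum (I : Type) (r : seq I) (P : pred I) (f : I -> F) :
  (forall i, P i -> S (f i)) -> S (\sum_(i <- r | P i) f i).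
Proof. by move=> Sf; apply: big_ind => //; [apply: subfield0 | apply: subfieldD]. Qed.

Lemma subfield_prod (I : Type) (r : seq I) (P : pred I) (f : I -> F) :
  (forall i, P i -> S (f i)) -> S (\prod_(i <- r | P i) f i).
Proof. by move=> Sf; apply: big_ind => //; [apply: subfield1 | apply: subfieldM]. Qed.

Lemma poly_overC c : S c -> poly_over S c%:P.
Proof. by move=> Sc i; rewrite coefC; case: ifP => // _; apply: subfield0. Qed.

Lemma poly_overX : poly_over S 'X.
Proof. by move=> i; rewrite coefX; case: (_ == _); [apply: subfield1 | apply: subfield0]. Qed.

Lemma poly_overB p q : poly_over S p -> poly_over S q -> poly_over S (p - q).
Proof. by move=> Sp Sq i; rewrite coefB; apply: subfieldB. Qed.

Lemma poly_overM p q : poly_over S p -> poly_over S q -> poly_over S (p * q).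
Proof. by move=> Sp Sq i; rewrite coefM; apply: subfield_sum => j _; apply: subfieldM. Qed.

End SubfieldClosure.

Lemma subfieldI S T : is_subfield S -> is_subfield T -> is_subfield (fun x => S x /\ T x).
Proof.
move=> sfS sfT; split.
- by split; apply: subfield0.
- by split; apply: subfield1.
- by move=> x y [? ?] [? ?]; split; apply: subfieldB.
- by move=> x y [? ?] [? ?]; split; apply: subfieldM.
- by move=> x [? ?]; split; apply: subfieldV.
Qed.

Lemma gen_field_subfield A : is_subfield (gen_field A).
Proof.
split=> [S sfS _|S sfS _|x y Ax Ay S sfS AS|x y Ax Ay S sfS AS|x Ax S sfS AS].
- exact: subfield0.
- exact: subfield1.
- by apply: subfieldB; [|apply: Ax|apply: Ay].
- by apply: subfieldM; [|apply: Ax|apply: Ay].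
- by apply: subfieldV; [|apply: Ax].
Qed.

Lemma gen_field_base A x : A x -> gen_field A x.
Proof. by move=> Ax S _; apply. Qed.

Lemma gen_field_min A S : is_subfield S -> (forall y, A y -> S y) ->
  forall x, gen_field A x -> S x.
Proof. by move=> sfS AS x; apply. Qed.

Lemma gen_field_mono A B : (forall x, A x -> B x) -> forall x, gen_field A x -> gen_field B x.
Proof.
by move=> AB; apply: gen_field_min (gen_field_subfield B) _ => y /AB /gen_field_base.
Qed.

Inductive span S (s : seq F) : F -> Prop :=
| span0 : span S s 0
| span_mem x : x \in s -> span S s x
| spanD x y : span S s x -> span S s y -> span S s (x + y)
| spanZ a x : S a -> span S s x -> span S s (a * x).
Arguments span0 {S s}.
Arguments span_mem {S s x}.

Definition lin_dep S m (v : nat -> F) :=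
  exists c : nat -> F, [/\ forall i, S (c i), exists2 i, (i < m)%N & c i != 0 &
                          \sum_(i < m) c i * v i = 0].

Section Span.
Variable S : F -> Prop.
Hypothesis sfS : is_subfield S.

Lemma span_sum s (I : Type) (r : seq I) (P : pred I) (f : I -> F) :
  (forall i, P i -> span S s (f i)) -> span S s (\sum_(i <- r | P i) f i).
Proof. by move=> sf; apply: big_ind => //; [apply: span0 | apply: spanD]. Qed.

Lemma spanN s x : span S s x -> span S s (- x).
Proof.
by move=> sx; rewrite -mulN1r; apply: spanZ sx; apply: (subfieldN sfS); apply: subfield1.
Qed.

Lemma span_nil x : span S [::] x -> x = 0.
Proof. by elim=> [|y|y z _ -> _ ->|a y _ _ ->]; rewrite ?in_nil ?addr0 ?mulr0. Qed.

Lemma span_cons x0 s y : span S (x0 :: s) y -> exists a, S a /\ span S s (y - a * x0).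
Proof.
elim=> [|y' y's|y1 y2 _ [a1 [Sa1 s1]] _ [a2 [Sa2 s2]]|b y' Sb _ [a [Sa s1]]].
- by exists 0; rewrite mul0r subr0; split; [apply: subfield0 | apply: span0].
- rewrite in_cons in y's; case/orP: y's => [/eqP ->|y's].
    by exists 1; rewrite mul1r subrr; split; [apply: subfield1 | apply: span0].
  by exists 0; rewrite mul0r subr0; split; [apply: subfield0 | apply: span_mem].
- exists (a1 + a2); split; first exact: subfieldD.
  by rewrite mulrDl opprD addrACA; apply: spanD.
- exists (b * a); split; first exact: subfieldM.
  by rewrite -mulrA -mulrBr; apply: spanZ.
Qed.

Lemma span_coords s x : span S s x ->
  exists c : nat -> F, (forall i, S (c i)) /\ x = \sum_(i < size s) c i * s`_i.
Proof.
elim=> [|y ys|y1 y2 _ [c1 [Sc1 ->]] _ [c2 [Sc2 ->]]|a y Sa _ [c [Sc ->]]].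
- exists (fun _ => 0); split=> [i|]; first exact: subfield0.
  by rewrite big1 // => i _; rewrite mul0r.
- exists (fun i => (i == index y s)%:R); split=> [i|].
    by case: (i == _); [apply: subfield1 | apply: subfield0].
  have ys' : (index y s < size s)%N by rewrite index_mem.
  rewrite (bigD1 (Ordinal ys')) //= eqxx mul1r nth_index // big1 ?addr0 // => i.
  by rewrite -val_eqE /= => /negbTE ->; rewrite mul0r.
- exists (fun i => c1 i + c2 i); split=> [i|]; first exact: subfieldD.
  by rewrite -big_split; apply: eq_bigr => i _; rewrite mulrDl.
- exists (fun i => a * c i); split=> [i|]; first exact: subfieldM.
  by rewrite mulr_sumr; apply: eq_bigr => i _; rewrite mulrA.
Qed.

Lemma lin_dep_elim m (v b : nat -> F) j0 : (j0 < m.+1)%N -> (forall i, S (b i)) ->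
  lin_dep S m (fun j => v (bump j0 j) - b (bump j0 j) * v j0) -> lin_dep S m.+1 v.
Proof.
move=> ltj0 Sb [c [Sc [j1 ltj1 cj1] sum_cv]].
have bumpF j : (bump j0 j == j0) = false by rewrite eq_sym (negbTE (neq_bump _ _)).
pose c0 := - \sum_(j < m) c j * b (bump j0 j).
exists (fun i => if i == j0 then c0 else c (unbump j0 i)); split.
- move=> i; case: (i == j0) => //.
  by apply: (subfieldN sfS); apply: (subfield_sum sfS) => j _; apply: (subfieldM sfS).
- by exists (bump j0 j1); [exact: bump_ltS | rewrite /= bumpF bumpK].
- rewrite (bigD1_ord (Ordinal ltj0)) //= eqxx /c0 mulNr mulr_suml -sumrN -big_split /=.
  by rewrite -[RHS]sum_cv; apply: eq_bigr => j _; rewrite bumpF bumpK; ring.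
Qed.

Lemma span_lin_dep w : forall m (v : nat -> F), (size w < m)%N ->
  (forall i, (i < m)%N -> span S w (v i)) -> lin_dep S m v.
Proof.
elim: w => [|x0 w IH] m v ltwm wv.
  exists (fun _ => 1); split=> [_||]; first exact: subfield1.
    by exists 0%N => //; apply: oner_neq0.
  by rewrite big1 // => i _; rewrite (span_nil (wv i (ltn_ord i))) mulr0.
have [a aP] : exists a : nat -> F,
    forall i, S (a i) /\ ((i < m)%N -> span S w (v i - a i * x0)).
  apply: (ClassicalEpsilon.choice
    (fun i a => S a /\ ((i < m)%N -> span S w (v i - a * x0)))) => i.
  case: (ltnP i m) => [/wv/span_cons [a [? ?]]|_]; first by exists a.
  by exists 0; split=> //; apply: subfield0.
have Sa i : S (a i) := proj1 (aP i).
have wa i : (i < m)%N -> span S w (v i - a i * x0) := proj2 (aP i).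
case: (classic (exists2 j0, (j0 < m)%N & a j0 != 0)) => [[j0 ltj0 aj0]|all_a0]; last first.
  apply: IH => [|i ltim]; first by rewrite /= ltnW.
  suff a0 : a i = 0 by move: (wa i ltim); rewrite a0 mul0r subr0.
  by apply: NNPP => /eqP ai; apply: all_a0; exists i.
case: m ltwm wv aP wa ltj0 => // m ltwm wv aP wa ltj0.
apply: (lin_dep_elim (b := fun i => a i / a j0) ltj0) => [i|]; first exact: subfield_div.
apply: IH => // j ltj; have ltbj := bump_ltS j0 ltj.
suff -> : v (bump j0 j) - a (bump j0 j) / a j0 * v j0 =
    v (bump j0 j) - a (bump j0 j) * x0 + (- (a (bump j0 j) / a j0)) * (v j0 - a j0 * x0).
  apply: spanD (wa _ ltbj) (spanZ _ (wa _ ltj0)).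
  by apply: (subfieldN sfS); apply: subfield_div.
by field.
Qed.

Lemma lin_dep_extend m (c : nat -> F) x : ~ lin_dep S m c ->
  lin_dep S m.+1 (fun i => if i == m then x else c i) ->
  exists e : nat -> F, (forall i, S (e i)) /\ x = \sum_(i < m) e i * c i.
Proof.
move=> indep [e [Se [i lti ei] sum_e]].
rewrite big_ord_recr /= eqxx (eq_bigr (fun i : 'I_m => e i * c i)) in sum_e; last first.
  by move=> k _; rewrite ltn_eqF.
have em : e m != 0.
  apply: contra_notN indep => /eqP em0; exists e; split=> //.
    exists i => //; move: lti; rewrite ltnS leq_eqVlt => /orP[/eqP im|//].
    by rewrite im em0 eqxx in ei.
  by rewrite em0 mul0r addr0 in sum_e.
exists (fun i => - (e m)^-1 * e i); split=> [k|].
  by apply: (subfieldM sfS) => //; apply/(subfieldN sfS)/(subfieldV sfS).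
have -> : x = - (e m)^-1 * \sum_(i < m) e i * c i.
  apply: (mulfI em); rewrite mulrA mulrN mulfV // mulN1r.
  by apply/eqP; rewrite -addr_eq0 addrC sum_e.
by rewrite mulr_sumr; apply: eq_bigr => k _; rewrite mulrA.
Qed.

Lemma span_basis_of_lin_dep (V : F -> Prop) N :
  (forall m c, (N < m)%N -> (forall i, (i < m)%N -> V (c i)) -> lin_dep S m c) ->
  exists s : seq F, (forall i, (i < size s)%N -> V s`_i) /\
    forall x, V x -> exists e : nat -> F, (forall i, S (e i)) /\ x = \sum_(i < size s) e i * s`_i.
Proof.
move=> depV; pose indep j := exists c, (forall i, (i < j)%N -> V (c i)) /\ ~ lin_dep S j c.
have [j [[c [Vc indc]] maxj]] : exists j, indep j /\ ~ indep j.+1.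
  apply: (exists_maximal_nat (N := N)) => [|j [c [Vc indc]]].
    by exists (fun _ => 0); split=> // -[e [_ [i]]].
  by rewrite leqNgt; apply/negP => ltNj; apply/indc/depV.
exists (mkseq c j); split=> [i|x Vx].
  by rewrite size_mkseq => ltij; rewrite nth_mkseq //; apply: Vc.
have [|e [Se ->]] := lin_dep_extend (x := x) indc.
  apply: NNPP => nd; apply: maxj; exists (fun i => if i == j then x else c i); split=> // i.
  by rewrite ltnS leq_eqVlt; case: eqP => [_ _|_ /= /Vc].
by exists e; split=> //; rewrite size_mkseq; apply: eq_bigr => i _; rewrite nth_mkseq.
Qed.

End Span.

Definition mul_stable (V : F -> Prop) z := forall v, V v -> V (z * v).

(* [P] lies in a subring of [F] that is finitely generated as an [S]-module. *)
Definition finite_module S (P : F -> Prop) :=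
  exists s, span S s 1 /\ forall x, P x -> mul_stable (span S s) x.

Section MulStable.
Variables (S : F -> Prop) (s : seq F).
Hypothesis sfS : is_subfield S.
Local Notation V := (span S s).

Lemma mul_stable0 : mul_stable V 0.
Proof. by move=> v _; rewrite mul0r; apply: span0. Qed.

Lemma mul_stable1 : mul_stable V 1.
Proof. by move=> v; rewrite mul1r. Qed.

Lemma mul_stableD x y : mul_stable V x -> mul_stable V y -> mul_stable V (x + y).
Proof. by move=> sx sy v sv; rewrite mulrDl; apply: spanD; [apply: sx | apply: sy]. Qed.

Lemma mul_stableM x y : mul_stable V x -> mul_stable V y -> mul_stable V (x * y).
Proof. by move=> sx sy v sv; rewrite -mulrA; apply/sx/sy. Qed.

Lemma mul_stableZ a x : S a -> mul_stable V x -> mul_stable V (a * x).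
Proof. by move=> Sa sx v sv; rewrite -mulrA; apply/spanZ/sx. Qed.

Lemma mul_stableS a : S a -> mul_stable V a.
Proof. by move=> Sa; rewrite -[a]mulr1; apply/mul_stableZ/mul_stable1. Qed.

Lemma mul_stableN x : mul_stable V x -> mul_stable V (- x).
Proof.
by move=> sx; rewrite -mulN1r; apply: mul_stableZ sx; apply: (subfieldN sfS); apply: subfield1.
Qed.

Lemma mul_stableX x i : mul_stable V x -> mul_stable V (x ^+ i).
Proof.
by move=> sx; elim: i => [|i IH]; rewrite ?expr0 ?exprS; [apply: mul_stable1 | apply: mul_stableM].
Qed.

Lemma mul_stable_horner q x : poly_over S q -> mul_stable V x -> mul_stable V q.[x].
Proof.
move=> Sq sx; rewrite horner_coef.
apply: big_ind => [|y z|i _]; [exact: mul_stable0 | exact: mul_stableD |].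
by apply/mul_stableZ/mul_stableX.
Qed.

Lemma mul_stable_gen x : (forall u, u \in s -> V (x * u)) -> mul_stable V x.
Proof.
move=> xs v; elim=> [|u us|u w _ su _ sw|a u Sa _ su].
- by rewrite mulr0; apply: span0.
- exact: xs.
- by rewrite mulrDr; apply: spanD.
- by rewrite mulrCA; apply: spanZ.
Qed.

Lemma span_mul_stable x : V 1 -> mul_stable V x -> V x.
Proof. by move=> s1 sx; rewrite -[x]mulr1; apply: sx. Qed.

End MulStable.

Section Algebraic.
Variable S : F -> Prop.
Hypothesis sfS : is_subfield S.

Lemma algebraic_base x : S x -> algebraic_over S x.
Proof.
move=> Sx; exists ('X - x%:P); first by rewrite polyXsubC_eq0.
by split; [apply: (poly_overB sfS); [apply: poly_overX | apply: poly_overC] | rewrite root_XsubC].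
Qed.

(* The powers [z ^+ i], [i <= size s], are dependent in the module. *)
Lemma algebraic_of_mul_stable s z : span S s 1 -> mul_stable (span S s) z ->
  algebraic_over S z.
Proof.
move=> s1 sz; have pow i : span S s (z ^+ i).
  by elim: i => [|i IH]; rewrite ?expr0 ?exprS //; apply: sz.
have [c [Sc [j ltj cj] sum_cz]] := span_lin_dep sfS (ltnSn (size s)) (fun i _ => pow i).
exists (\poly_(i < (size s).+1) c i); last split.
- apply: contra cj => /eqP/(congr1 (fun q : {poly F} => q`_j)).
  by rewrite coef_poly ltj coef0 => ->.
- by move=> i; rewrite coef_poly; case: ifP => _ //; apply: subfield0.
- by apply/rootP; rewrite horner_poly.
Qed.

Lemma algebraic_powers_span x : algebraic_over S x ->
  exists s, [/\ span S s 1, mul_stable (span S s) x & forall y, y \in s -> exists i, y = x ^+ i].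
Proof.
move=> [p p0 [Sp px]]; pose N := (size p).-1.
have sizep : size p = N.+1 by rewrite prednK // ltnW // (root_size_gt1 p0 px).
have N0 : (0 < N)%N by rewrite -ltnS -sizep (root_size_gt1 p0 px).
pose s := mkseq (GRing.exp x) N.
have pow i : (i < N)%N -> x ^+ i \in s by move=> ltiN; apply/mapP; exists i; rewrite ?mem_iota.
have topN : x ^+ N = - ((lead_coef p)^-1 * \sum_(j < N) p`_j * x ^+ j).
  have lp0 : lead_coef p != 0 by rewrite lead_coef_eq0.
  move/rootP: px; rewrite horner_coef sizep big_ord_recr /= -[p`_N]/(lead_coef p) => px.
  apply: (mulfI lp0); rewrite mulrN mulrA mulfV // mul1r.
  by apply/eqP; rewrite -addr_eq0 addrC px.
exists s; split.
- by rewrite -(expr0 x); apply/span_mem/pow.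
- apply: mul_stable_gen => u /mapP [i]; rewrite mem_iota add0n => /andP[_ ltiN] ->.
  rewrite -exprS; case: (ltnP i.+1 N) => [/pow /span_mem //| geN].
  have -> : i.+1 = N by apply/eqP; rewrite eqn_leq geN ltiN.
  rewrite topN; apply: (spanN sfS); apply: spanZ.
    by apply: (subfieldV sfS); rewrite lead_coefE.
  by apply: span_sum => j _; apply/spanZ/span_mem/pow.
- by move=> y /mapP [i _ ->]; exists i.
Qed.

Lemma algebraic_inv_poly y : algebraic_over S y -> y != 0 ->
  exists2 q, poly_over S q & y^-1 = q.[y].
Proof.
move=> [p p0 [Sp py]] y0; move: {2}(size p) (leqnn (size p)) => N.
elim: N p p0 Sp py => [|N IH] p p0 Sp py sizep.
  by move: p0; rewrite -size_poly_eq0 -leqn0 sizep.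
pose q := drop_poly 1 p.
have Sq : poly_over S q by move=> i; rewrite coef_drop_poly.
have pE : p = (p`_0)%:P + q * 'X.
  rewrite -[LHS](poly_take_drop 1) expr1; congr (_ + _).
  by apply/polyP => -[|i]; rewrite coef_take_poly coefC.
have qy : q.[y] * y + p`_0 = 0.
  by move/rootP: py; rewrite {1}pE hornerD hornerC hornerMX addrC.
have [p00|p0n0] := eqVneq (p`_0) 0.
  apply: (IH q) => //.
  - by apply: contra p0 => /eqP q0; rewrite pE q0 p00 mul0r addr0.
  - by apply/rootP; move: qy; rewrite p00 addr0 => /eqP; rewrite mulf_eq0 (negbTE y0) orbF => /eqP.
  - by rewrite size_drop_poly leq_subLR add1n.
exists ((- (p`_0)^-1) *: q).
  by move=> i; rewrite coefZ; apply: (subfieldM sfS) => //; apply/(subfieldN sfS)/(subfieldV sfS).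
have qyE : q.[y] = - p`_0 / y.
  by apply: (mulIf y0); rewrite divfK //; apply/eqP; rewrite -addr_eq0 qy.
by rewrite hornerZ qyE; field; apply/andP.
Qed.

Lemma mul_stable_subfield s : span S s 1 -> is_subfield (mul_stable (span S s)).
Proof.
move=> s1; split=> [|||x y sx sy|x sx].
- exact: mul_stable0.
- exact: mul_stable1.
- by move=> x y sx sy; apply: mul_stableD sx _; apply: mul_stableN.
- exact: mul_stableM.
- have [->|x0] := eqVneq x 0; first by rewrite invr0; apply: mul_stable0.
  have [q Sq ->] := algebraic_inv_poly (algebraic_of_mul_stable s1 sx) x0.
  exact: mul_stable_horner.
Qed.

Lemma span_allpairsM T s w u y : (forall a, T a -> mul_stable (span S s) a) ->
  span S s u -> span T w y -> span S [seq a * b | a <- s, b <- w] (u * y).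
Proof.
move=> Ts su sy; elim: sy u su => [|z zw|z1 z2 _ IH1 _ IH2|a z Ta _ IH] u su.
- by rewrite mulr0; apply: span0.
- elim: su => [|x xs|x1 x2 _ s1 _ s2|b x Sb _ sx].
  + by rewrite mul0r; apply: span0.
  + by apply: span_mem; apply: allpairs_f.
  + by rewrite mulrDl; apply: spanD.
  + by rewrite -mulrA; apply: spanZ.
- by rewrite mulrDr; apply: spanD; [apply: IH1 | apply: IH2].
- by rewrite mulrA [u * a]mulrC; apply: IH; apply: Ts.
Qed.

Lemma finite_moduleU P1 P2 : finite_module S P1 -> finite_module S P2 ->
  finite_module S (fun x => P1 x \/ P2 x).
Proof.
move=> [s1 [s11 st1]] [s2 [s21 st2]].
have Ss1 a : S a -> mul_stable (span S s1) a by apply: mul_stableS.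
exists [seq a * b | a <- s1, b <- s2]; split.
  by rewrite -[1]mulr1; apply: (span_allpairsM Ss1).
move=> x Px; apply: mul_stable_gen => _ /allpairsP [[a b] /= [as1 bs2 ->]].
case: Px => [/st1 st|/st2 st].
- by rewrite mulrA; apply: (span_allpairsM Ss1 (st _ (span_mem as1)) (span_mem bs2)).
- by rewrite mulrCA; apply: (span_allpairsM Ss1 (span_mem as1) (st _ (span_mem bs2))).
Qed.

Lemma finite_module_algebraic x : algebraic_over S x -> finite_module S (fun y => y = x).
Proof. by move=> /algebraic_powers_span [s [s1 sx _]]; exists s; split=> // _ ->. Qed.

Lemma finite_module_seq (bs : seq F) : (forall b, b \in bs -> algebraic_over S b) ->
  finite_module S (fun b => b \in bs).
Proof.
elim: bs => [|b bs IH] algbs; first by exists [:: 1]; split=> //; apply/span_mem/mem_head.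
have [s [s1 st]] := finite_moduleU (finite_module_algebraic (algbs b (mem_head _ _)))
  (IH (fun c cbs => algbs c (mem_behead (s := b :: bs) cbs))).
by exists s; split=> // x; rewrite inE => /orP[/eqP|] xbs; apply: st; [left | right].
Qed.

Lemma finite_module_gen_field P x : finite_module S P -> gen_field P x -> algebraic_over S x.
Proof.
move=> [s [s1 st]] /(gen_field_min (mul_stable_subfield s1) st).
exact: algebraic_of_mul_stable.
Qed.

Lemma algebraic_subfield : is_subfield (algebraic_over S).
Proof.
pose G x y := gen_field (fun u => u = x \/ u = y).
have algG x y : algebraic_over S x -> algebraic_over S y ->
    forall z, G x y z -> algebraic_over S z.
  move=> ax ay z; apply: finite_module_gen_field.
  exact: finite_moduleU (finite_module_algebraic ax) (finite_module_algebraic ay).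
have [Gx Gy] : (forall x y, G x y x) /\ (forall x y, G x y y).
  by split=> x y; apply: gen_field_base; [left | right].
have sfG x y : is_subfield (G x y) := gen_field_subfield _.
split=> [||x y ax ay|x y ax ay|x ax].
- exact: algebraic_base (subfield0 sfS).
- exact: algebraic_base (subfield1 sfS).
- exact: algG ax ay _ (subfieldB (sfG x y) (Gx x y) (Gy x y)).
- exact: algG ax ay _ (subfieldM (sfG x y) (Gx x y) (Gy x y)).
- exact: (algG x x ax ax) _ (subfieldV (sfG x x) (Gx x x)).
Qed.

End Algebraic.

Lemma algebraic_trans S T z : is_subfield S -> is_subfield T ->
  (forall x, T x -> algebraic_over S x) -> algebraic_over T z -> algebraic_over S z.
Proof.
move=> sfS sfT TS [p p0 [Tp pz]].
have [sb [sb1 stb]] : finite_module S (fun b => b \in polyseq p).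
  by apply: finite_module_seq => // _ /(nthP 0) [i _ <-]; apply/TS/Tp.
pose T' := mul_stable (span S sb).
have T'p : poly_over T' p.
  move=> i; case: (ltnP i (size p)) => [ltip|?]; first exact/stb/mem_nth.
  by rewrite nth_default //; apply: mul_stable0.
have [w [w1 wz _]] := algebraic_powers_span (mul_stable_subfield sfS sb1)
  (ex_intro2 _ _ p p0 (conj T'p pz)).
have T'st a : T' a -> mul_stable (span S sb) a by [].
apply: (algebraic_of_mul_stable sfS (s := [seq a * b | a <- sb, b <- w])).
  by rewrite -[1]mulr1; apply: (span_allpairsM T'st sb1 w1).
apply: mul_stable_gen => _ /allpairsP [[u y] /= [usb yw ->]].
by rewrite mulrCA; apply: (span_allpairsM T'st (span_mem usb) (wz _ (span_mem yw))).
Qed.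

End Subfields.

Section Fractions.
Variables (F : fieldType) (R : comNzRingType) (phi : {rmorphism R -> F}) (I : R -> Prop).
Hypotheses (I0 : I 0) (I1 : I 1) (IB : forall a b, I a -> I b -> I (a - b))
  (IM : forall a b, I a -> I b -> I (a * b)).

Definition frac_of (x : F) := exists a b, [/\ I a, I b, phi b != 0 & x = phi a / phi b].

Lemma frac_of_base a : I a -> frac_of (phi a).
Proof. by move=> Ia; exists a, 1; rewrite rmorph1 divr1 oner_neq0. Qed.

Lemma frac_of_subfield : is_subfield frac_of.
Proof.
split=> [||x y|x y|x].
- by rewrite -(rmorph0 phi); apply: frac_of_base.
- by rewrite -(rmorph1 phi); apply: frac_of_base.
- move=> [a1 [b1 [Ia1 Ib1 b10 ->]]] [a2 [b2 [Ia2 Ib2 b20 ->]]].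
  exists (a1 * b2 - a2 * b1), (b1 * b2); rewrite rmorphB !rmorphM mulf_neq0 //.
  by split; [apply: IB; apply: IM | apply: IM | | field; apply/andP].
- move=> [a1 [b1 [Ia1 Ib1 b10 ->]]] [a2 [b2 [Ia2 Ib2 b20 ->]]].
  exists (a1 * a2), (b1 * b2); rewrite !rmorphM mulf_neq0 //.
  by split; [apply: IM | apply: IM | | field; apply/andP].
- move=> [a [b [Ia Ib b0 ->]]]; have [a0|a0] := eqVneq (phi a) 0.
    by rewrite a0 mul0r invr0 -(rmorph0 phi); apply: frac_of_base.
  by exists b, a; rewrite invf_div.
Qed.

Lemma common_denominator m (r : nat -> F) : (forall i, (i < m)%N -> frac_of (r i)) ->
  exists D (h : nat -> R), [/\ I D, phi D != 0, forall i, I (h i) &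
    forall i, (i < m)%N -> phi (h i) = r i * phi D].
Proof.
elim: m => [|m IH] fr; first by exists 1, (fun _ => 1); rewrite rmorph1 oner_neq0.
have [D [h [ID D0 Ih hP]]] := IH (fun i lti => fr i (ltnW lti)).
have [a [b [Ia Ib b0 rm]]] := fr m (ltnSn m).
exists (D * b), (fun i => if i == m then a * D else h i * b); split.
- exact: IM.
- by rewrite rmorphM mulf_neq0.
- by move=> i; case: eqP => _; apply: IM.
- move=> i; rewrite ltnS leq_eqVlt; case: eqP => [-> _|_ /= /hP hi]; rewrite !rmorphM.
    by rewrite rm; field.
  by rewrite hi mulrA.
Qed.

End Fractions.

Section Transcendence.
Variables (k L : fieldType) (iota : {rmorphism k -> L}) (n : nat) (t : 'I_n -> L) (i0 : 'I_n).
Hypothesis hindep : forall P : {mpoly k[n]}, (map_mpoly iota P).@[t] = 0 -> P = 0.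

Definition eval_t : {rmorphism {mpoly k[n]} -> L} := (meval t \o map_mpoly iota)%FUN.

Definition zero_at_i0 : n.-tuple {mpoly k[n]} := [tuple if i == i0 then 0 else 'X_i | i < n].

Definition free_of_i0 (P : {mpoly k[n]}) := P \mPo zero_at_i0 = P.

Lemma free_of_i0_0 : free_of_i0 0. Proof. exact: comp_mpoly0. Qed.
Lemma free_of_i0_1 : free_of_i0 1. Proof. exact: comp_mpoly1. Qed.

Lemma free_of_i0B P Q : free_of_i0 P -> free_of_i0 Q -> free_of_i0 (P - Q).
Proof. by rewrite /free_of_i0 comp_mpolyB => -> ->. Qed.

Lemma free_of_i0M P Q : free_of_i0 P -> free_of_i0 Q -> free_of_i0 (P * Q).
Proof. by rewrite /free_of_i0 rmorphM /= => -> ->. Qed.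

Lemma free_of_i0C c : free_of_i0 c%:MP. Proof. exact: comp_mpolyC. Qed.

Lemma free_of_i0X j : j != i0 -> free_of_i0 'X_j.
Proof. by move=> ji0; rewrite /free_of_i0 comp_mpolyXU -tnth_nth tnth_mktuple (negbTE ji0). Qed.

Lemma free_of_i0_coef_eq0 m (H : nat -> {mpoly k[n]}) : (forall j, free_of_i0 (H j)) ->
  \sum_(j < m) 'X_i0 ^+ j * H j = 0 -> forall j, (j < m)%N -> H j = 0.
Proof.
elim: m H => [|m IH] H fH // sumH.
have X0 : 'X_i0 \mPo zero_at_i0 = 0 by rewrite comp_mpolyXU -tnth_nth tnth_mktuple eqxx.
have Xn0 : 'X_i0 != 0 :> {mpoly k[n]}.
  apply/eqP => /(congr1 (mcoeff U_(i0))).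
  by rewrite mcoeffXU eqxx mcoeff0 => /eqP; rewrite oner_eq0.
rewrite big_ord_recl expr0 mul1r (eq_bigr (fun i : 'I_m => 'X_i0 * ('X_i0 ^+ i * H i.+1))) in sumH;
  last by move=> i _; rewrite exprS mulrA.
rewrite -mulr_sumr in sumH.
have H0 : H 0%N = 0.
  move/(congr1 (comp_mpoly zero_at_i0)): sumH.
  by rewrite comp_mpolyD rmorphM /= X0 mul0r addr0 fH comp_mpoly0.
move: sumH; rewrite H0 add0r => /eqP; rewrite mulf_eq0 (negbTE Xn0) /= => /eqP sumH.
by case=> // j; apply: (IH (fun i => H i.+1)).
Qed.

Lemma eval_tC c : eval_t c%:MP = iota c.
Proof. by rewrite /eval_t /= map_mpolyC mevalC. Qed.

Lemma eval_tX j : eval_t 'X_j = t j.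
Proof. by rewrite /eval_t /= map_mpolyX mevalXU. Qed.

Definition others : L -> Prop :=
  gen_field (fun x => (exists c, x = iota c) \/ (exists2 j, j != i0 & x = t j)).

Lemma others_frac x : others x -> frac_of eval_t free_of_i0 x.
Proof.
apply: gen_field_min => [|_ [[c ->]|[j ji0 ->]]].
- exact: frac_of_subfield free_of_i0_0 free_of_i0_1 free_of_i0B free_of_i0M.
- rewrite -eval_tC; exact (frac_of_base eval_t free_of_i0_1 (free_of_i0C c)).
- rewrite -eval_tX; exact (frac_of_base eval_t free_of_i0_1 (free_of_i0X ji0)).
Qed.

Lemma poly_over_others_root_eq0 (B : {poly L}) : poly_over others B -> B.[t i0] = 0 -> B = 0.
Proof.
move=> oB Bt.
have [D [H [_ D0 fH HP]]] := common_denominator free_of_i0_1 free_of_i0M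
  (m := size B) (r := fun i => B`_i) (fun i _ => others_frac (oB i)).
have sum0 : \sum_(j < size B) 'X_i0 ^+ j * H j = 0.
  apply: hindep; rewrite -[meval _ _]/(eval_t _) rmorph_sum.
  transitivity (B.[t i0] * eval_t D); last by rewrite Bt mul0r.
  rewrite horner_coef mulr_suml; apply: eq_bigr => j _.
  by rewrite rmorphM rmorphXn eval_tX HP // mulrCA mulrA.
have H0 := free_of_i0_coef_eq0 fH sum0.
apply/polyP => j; rewrite coef0; case: (ltnP j (size B)) => [ltj|?]; last by rewrite nth_default.
have := HP _ ltj; rewrite H0 // rmorph0 => /esym/eqP.
by rewrite mulf_eq0 (negbTE D0) orbF => /eqP.
Qed.

Lemma poly_over_algebraic_others_root_eq0 (B : {poly L}) :
  poly_over (algebraic_over others) B -> B.[t i0] = 0 -> B = 0.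
Proof.
move=> aB Bt; have [//|B0] := eqVneq B 0; exfalso.
have sfO : is_subfield others := gen_field_subfield _.
have [p p0 [op pt]] : algebraic_over others (t i0).
  apply: (algebraic_trans sfO (algebraic_subfield sfO)) => //; exists B => //.
  by split=> //; apply/rootP.
by move/eqP: p0; apply; apply: poly_over_others_root_eq0 op (rootP pt).
Qed.

End Transcendence.

Section ConstantFieldExtension.
Variables (k L : fieldType) (iota : {rmorphism k -> L}) (n : nat) (t : 'I_n -> L) (i0 : 'I_n).
Hypothesis hindep : forall P : {mpoly k[n]}, (map_mpoly iota P).@[t] = 0 -> P = 0.
Variables (alpha : L) (mu : {poly L}) (P Q : nat -> {mpoly k[n]}).
Hypothesis hmu : minpoly_over
  (gen_field (fun x => (exists c, x = iota c) \/ (exists j, x = t j))) alpha mu.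
Hypothesis hPQ : forall i, (i < size mu)%N ->
  mu`_i = (map_mpoly iota (P i)).@[t] / (map_mpoly iota (Q i)).@[t].

Definition kappa0 : k -> Prop :=
  gen_field (fun c => exists i, exists m : 'X_{1..n},
               (i < size mu)%N /\ (c = (P i)@_m \/ c = (Q i)@_m)).

Definition kappa0T : L -> Prop :=
  gen_field (fun x => (exists c, kappa0 c /\ x = iota c) \/ (exists2 j, j != i0 & x = t j)).

Definition kappa0F : L -> Prop :=
  gen_field (fun x => (exists c, kappa0 c /\ x = iota c) \/ (exists j, x = t j)).

Definition K : L -> Prop := gen_field (fun x => kappa0F x \/ x = alpha).

Definition k1 : L -> Prop := algebraic_over (others iota t i0).

Definition kappa (x : L) := k1 x /\ K x.

Let sfT : is_subfield kappa0T := gen_field_subfield _.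
Let sfF : is_subfield kappa0F := gen_field_subfield _.
Let sfK : is_subfield K := gen_field_subfield _.
Let sfk1 : is_subfield k1 := algebraic_subfield (gen_field_subfield _).

Lemma kappa0F_eval R : (forall m, kappa0 R@_m) -> kappa0F (map_mpoly iota R).@[t].
Proof.
move=> kR; rewrite mevalE; apply: (subfield_sum sfF) => m _; apply: (subfieldM sfF).
  by rewrite mcoeff_map_mpoly; apply: gen_field_base; left; exists R@_m.
apply: (subfield_prod sfF) => i _; apply: (subfieldX sfF).
by apply: gen_field_base; right; exists i.
Qed.

Lemma alpha_algebraic : algebraic_over kappa0F alpha.
Proof.
case: hmu => mon _ mu_alpha _; exists mu; first exact: monic_neq0.
split=> // i; case: (ltnP i (size mu)) => [ltim|?]; last first.
  by rewrite nth_default //; apply: subfield0.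
have kPQ m : kappa0 (P i)@_m /\ kappa0 (Q i)@_m.
  by split; apply: gen_field_base; exists i, m; split=> //; [left | right].
by rewrite hPQ //; apply: (subfield_div sfF); apply: kappa0F_eval => m; case: (kPQ m).
Qed.

Lemma kappa0T_kappa x : kappa0T x -> kappa x.
Proof.
move=> Tx; split.
  apply: algebraic_base; first exact: gen_field_subfield.
  by apply: gen_field_mono Tx => _ [[c [_ ->]]|[j ji0 ->]]; [left; exists c | right; exists j].
apply: gen_field_base; left; apply: gen_field_mono Tx => y [Tc|[j _ ->]]; first by left.
by right; exists j.
Qed.

Lemma kappa_subfield : is_subfield kappa.
Proof. exact: subfieldI. Qed.

Lemma K_span : exists s : seq L,
  (forall y, y \in s -> K y) /\ forall x, K x -> span kappa0F s x.
Proof.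
have [s [s1 st spow]] := algebraic_powers_span sfF alpha_algebraic.
exists s; split=> [y /spow [i ->]|x Kx].
  by apply: (subfieldX sfK); apply: gen_field_base; right.
apply: (span_mul_stable s1); move: x Kx.
apply: gen_field_min (mul_stable_subfield sfF s1) _ => y [Fy|->] //.
exact: mul_stableS.
Qed.

Lemma kappa0F_frac x : kappa0F x -> frac_of (horner_eval (t i0)) (poly_over kappa0T) x.
Proof.
have Tpoly := poly_overC sfT (subfield1 sfT).
have fr_const y : kappa0T y -> frac_of (horner_eval (t i0)) (poly_over kappa0T) y.
  by move=> Ty; rewrite -[y](hornerC y (t i0)); exact (frac_of_base _ Tpoly (poly_overC sfT Ty)).
apply: gen_field_min => [|_ [[c [kc ->]]|[j ->]]].
- exact: frac_of_subfield (poly_overC sfT (subfield0 sfT)) Tpoly (poly_overB sfT) (poly_overM sfT).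
- by apply: fr_const; apply: gen_field_base; left; exists c.
- have [->|ji0] := eqVneq j i0; last by apply: fr_const; apply: gen_field_base; right; exists j.
  by rewrite -[X in frac_of _ _ X](hornerX (t i0)); exact (frac_of_base _ Tpoly (poly_overX sfT)).
Qed.

(* Elements of [kappa] that are dependent over [kappa0F = kappa0T(t i0)] are already
   dependent over [kappa0T]: clear denominators, then use that [t i0] is transcendental
   over [k1], which contains [kappa] and [kappa0T]. *)
Lemma kappa_lin_dep s : (forall x, K x -> span kappa0F s x) ->
  forall m c, (size s < m)%N -> (forall i, (i < m)%N -> kappa (c i)) -> lin_dep kappa0T m c.
Proof.
move=> Ks m c ltsm kc.
have [r [Fr [i1 lti1 r1] sum_rc]] := span_lin_dep sfF ltsm (fun i lti => Ks _ (proj2 (kc i lti))).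
have [D [h [_ D0 Th hD]]] := common_denominator (poly_overC sfT (subfield1 sfT))
  (poly_overM sfT) (m := m) (r := r) (fun i _ => kappa0F_frac (Fr i)).
have {}D0 : D.[t i0] != 0 := D0.
have {}hD i : (i < m)%N -> (h i).[t i0] = r i * D.[t i0] := hD i.
have A0 : \sum_(i < m) (c i)%:P * h i = 0.
  apply: (poly_over_algebraic_others_root_eq0 hindep) => [j|].
    rewrite coef_sum; apply: (subfield_sum sfk1) => i _; rewrite coefCM.
    exact (subfieldM sfk1 (proj1 (kc i (ltn_ord i))) (proj1 (kappa0T_kappa (Th i j)))).
  rewrite horner_sum; transitivity ((\sum_(i < m) r i * c i) * D.[t i0]).
    by rewrite mulr_suml; apply: eq_bigr => i _; rewrite hornerM hornerC hD // mulrCA mulrA.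
  by rewrite sum_rc mul0r.
have hi1 : h i1 != 0.
  by apply: contraTneq (mulf_neq0 r1 D0) => hi10; rewrite -hD // hi10 horner0 eqxx.
pose j := (size (h i1)).-1.
exists (fun i => (h i)`_j); split=> [i||]; first exact: Th.
  by exists i1 => //; rewrite -lead_coefE lead_coef_eq0.
have := congr1 (fun p : {poly L} => p`_j) A0; rewrite coef0 coef_sum => sumA.
by rewrite -[RHS]sumA; apply: eq_bigr => i _; rewrite coefCM mulrC.
Qed.

Lemma kappa_finite : finite_ext kappa kappa0T.
Proof.
have [s [_ Ks]] := K_span.
split; [exact: kappa_subfield | exact: sfT | exact: kappa0T_kappa |].
exact (span_basis_of_lin_dep sfT (kappa_lin_dep Ks)).
Qed.

Lemma kappa0F_sub_kappa_t x : kappa0F x -> gen_field (fun y => kappa y \/ y = t i0) x.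
Proof.
apply: gen_field_mono => _ [[c [kc ->]]|[j ->]].
  by left; apply: kappa0T_kappa; apply: gen_field_base; left; exists c.
have [->|ji0] := eqVneq j i0; first by right.
by left; apply: kappa0T_kappa; apply: gen_field_base; right; exists j.
Qed.

Lemma K_finite : finite_ext K (gen_field (fun x => kappa x \/ x = t i0)).
Proof.
split; [exact: sfK | exact: gen_field_subfield | |].
  apply: gen_field_min sfK _ => _ [[_ Ky]|->] //.
  by apply: gen_field_base; left; apply: gen_field_base; right; exists i0.
have [s [sK Ks]] := K_span.
exists s; split=> [i lti|x Kx]; first by apply: sK; apply: mem_nth.
have [e [Fe ->]] := span_coords sfF (Ks x Kx).
by exists e; split=> // i; apply: kappa0F_sub_kappa_t.
Qed.

Hypothesis hgen : forall x : L,
  gen_field (fun y => (exists c, y = iota c) \/ (exists j, y = t j) \/ y = alpha) x.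

Lemma K_constant_field_ext : constant_field_ext (fun _ => True) k1 K kappa.
Proof.
split=> x; split=> // _; move: x (hgen x).
apply: gen_field_mono => _ [[c ->]|[[j ->]|->]].
- right; apply: algebraic_base; first exact: gen_field_subfield.
  by apply: gen_field_base; left; exists c.
- by left; apply: gen_field_base; left; apply: gen_field_base; right; exists j.
- by left; apply: gen_field_base; right.
Qed.

End ConstantFieldExtension.

Theorem proposition3p4
  (k L : fieldType) (iota : {rmorphism k -> L})
  (hchar : [pchar k] =i pred0)
  (n : nat) (hn : (2 <= n)%N)
  (t : 'I_n -> L) (i0 : 'I_n)
  (* tau := t i0 ; tau_2, ..., tau_n := t j for j != i0 ;
     they are algebraically independent over k *)
  (hindep : forall P : {mpoly k[n]}, (map_mpoly iota P).@[t] = 0 -> P = 0)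
  (alpha : L)
  (* F := k(tau, tau_2, ..., tau_n) inside L *)
  (halg : algebraic_over
            (gen_field (fun x => (exists c, x = iota c) \/ (exists j, x = t j)))
            alpha)
  (* L = F(alpha) *)
  (hgen : forall x : L,
     gen_field (fun y => (exists c, y = iota c) \/ (exists j, y = t j)
                         \/ y = alpha) x)
  (* k is algebraically closed in L *)
  (hkclosed : alg_closed_in (fun x => exists c, x = iota c) (fun _ => True))
  (* the minimal polynomial of alpha over F, with coefficients p_i / q_i *)
  (mu : {poly L})
  (hmu : minpoly_over
           (gen_field (fun x => (exists c, x = iota c) \/ (exists j, x = t j)))
           alpha mu)
  (P Q : nat -> {mpoly k[n]})
  (hQ : forall i, (i < size mu)%N -> (map_mpoly iota (Q i)).@[t] != 0)
  (hPQ : forall i, (i < size mu)%N ->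
     mu`_i = (map_mpoly iota (P i)).@[t] / (map_mpoly iota (Q i)).@[t]) :
  (* kappa0 : subfield of k generated by all coefficients of the p_i, q_i *)
  let kappa0 : k -> Prop :=
    gen_field (fun c => exists i, exists m : 'X_{1..n},
                 (i < size mu)%N /\ (c = (P i)@_m \/ c = (Q i)@_m)) in
  (* kappa0(tau_2, ..., tau_n) inside L *)
  let kappa0T : L -> Prop :=
    gen_field (fun x => (exists c, kappa0 c /\ x = iota c) \/
                        (exists2 j, j != i0 & x = t j)) in
  (* k1 : algebraic closure of k(tau_2, ..., tau_n) in L *)
  let k1 : L -> Prop :=
    alg_closure_in
      (gen_field (fun x => (exists c, x = iota c) \/
                           (exists2 j, j != i0 & x = t j))) in
  exists kappa K : L -> Prop,
    [/\ finite_ext kappa kappa0T,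
        finite_ext K (gen_field (fun x => kappa x \/ x = t i0)) &
        constant_field_ext (fun _ => True) k1 K kappa].
Proof.
move=> kappa0' kappa0T' k1'.
exists (kappa iota t i0 alpha mu P Q), (K iota t alpha mu P Q); split.
- exact (kappa_finite i0 hindep hmu hPQ).
- exact (K_finite i0 hmu hPQ).
- exact (K_constant_field_ext i0 mu P Q hgen).
Qed.
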